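(* Let $\{x_k\}$, $\{\tilde x_k\}$ and $\{\xi_k\}$ be the sequences produced by Algorithm DFNDFL (described in the context) applied to $\min\{f(x): x\in X\cap\mathcal{Z}\}$, let $H=\{k:\xi_{k+1}<\xi_k\}$, and let $x^*\in X\cap\mathcal{Z}$ be any accumulation point of $\{x_k\}_{k\in H}$. Then $f(x^* )\le f(\bar x)$ for all $\bar x\in\mathcal{B}^z(x^* )$, where $\mathcal{B}^z(x^* )=\{x^*+d: d\in D^z(x^* )\}$.
   Context: Setting. $\{1,\dots,n\}=I^c\cup I^z$, $I^c\cap I^z=\emptyset$; for $v\in\mathbb{R}^n$, $v_c=(v_i)_{i\in I^c}$, $v_z=(v_i)_{i\in I^z}$. $l,u\in\mathbb{R}^n$ finite, $l_i<u_i$, $l_i,u_i\in\mathbb{Z}$ for $i\in I^z$; $X=\{x:l\le x\le u\}$; $\mathcal{Z}=\{x:x_i\in\mathbb{Z}\ \forall i\in I^z\}$; $[x]_{[l,u]}=\max\{l,\min\{u,x\}\}$ componentwise; $\|\cdot\|$ Euclidean. $f:\mathbb{R}^n\to\mathbb{R}$ is Lipschitz w.r.t. continuous variables: $\exists L>0$, $|f(x)-f(y)|\le L\|x-y\|$ whenever $x_z=y_z$. A vector in $\mathbb{Z}^p$ is primitive if the gcd of its components is 1. For $x\in X\cap\mathcal{Z}$: $D^z(x)=\{d\in\mathbb{Z}^n: d_i=0\ (i\in I^c),\ d_z \text{ primitive},\ x+d\in X\cap\mathcal{Z}\}$; $D^c(x)=\{s\in\mathbb{R}^n: s_i=0\ (i\in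 I^z),\ s_i\ge0 \text{ if } i\in I^c, x_i=l_i,\ s_i\le 0 \text{ if } i\in I^c, x_i=u_i\}$. Procedures (data $\gamma>0$, $\delta\in(0,1)$). PCS$(\tilde\alpha,w,p)$: set $\alpha=\tilde\alpha$; if $f([w+\alpha p]_{[l,u]})\le f(w)-\gamma\alpha^2$ set $\tilde p=p$, else if $f([w-\alpha p]_{[l,u]})\le f(w)-\gamma\alpha^2$ set $\tilde p=-p$, else return $(0,p)$; then repeat: $\beta=\alpha/\delta$; if $f([w+\beta\tilde p]_{[l,u]})>f(w)-\gamma\beta^2$ return $(\alpha,\tilde p)$, else $\alpha=\beta$. DS$(\tilde\alpha,w,p,\xi)$: let $\bar\alpha$ be the largest $\alpha\ge0$ with $w+\alpha p\in X\cap\mathcal{Z}$, set $\alpha=\min\{\bar\alpha,\tilde\alpha\}$; if not ($\alpha>0$ and $f(w+\alpha p)\le f(w)-\xi$) return $0$; otherwise, while $\alpha<\bar\alpha$ and $f(w+\min\{\bar\alpha,2\alpha\}p)\le f(w)-\xi$, set $\alpha=\min\{\bar\alpha,2\alpha\}$; then return $\alpha$. Algorithm DFNDFL. Data: $x_0\in X\cap\mathcal{Z}$, $\xi_0>0$, $\theta\in(0,1)$; a sequence $\{s_k\}$ with $s_k\in D^c(x_0)$, $\|s_k\|=1$; $\tilde\alpha^c_0=1$; a set $D_0\subset D^z(x_0)$ with $\tilde\alpha^{(d)}_0=1$ for $d\in D_0$; $D:=D_0$ (tentative steps $\tilde\alpha^{(d)}$ not updated in an iteration keep their value). For $k=0,1,\dots$: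 Phase 1: $(\alpha^c_k,\tilde s_k)=$PCS$(\tilde\alpha^c_k,x_k,s_k)$; if $\alpha^c_k=0$ set $\tilde\alpha^c_{k+1}=\theta\tilde\alpha^c_k$, $\tilde x_k=x_k$; else $\tilde\alpha^c_{k+1}=\alpha^c_k$, $\tilde x_k=[x_k+\alpha^c_k\tilde s_k]_{[l,u]}$. Phase 2.A: set $y^+=\tilde x_k$; while $D\ne\emptyset$ and $y^+=\tilde x_k$: choose $d\in D$, set $D=D\setminus\{d\}$, $y=y^+$, $\alpha=$DS$(\tilde\alpha^{(d)}_k,y,d,\xi_k)$; if $\alpha=0$ set $y^+=y$, $\tilde\alpha^{(d)}_{k+1}=\max\{1,\lfloor\tilde\alpha^{(d)}_k/2\rfloor\}$; else $y^+=y+\alpha d$, $\tilde\alpha^{(d)}_{k+1}=\alpha$. Phase 2.B: if $y^+=\tilde x_k$ and the Discrete Search failed (returned $0$) with $\tilde\alpha^{(d)}_k=1$ for all $d\in D_k$, then set $\xi_{k+1}=\theta\xi_k$ and: if $D_k\supseteq D^z(\tilde x_k)$ set $D_{k+1}=D_k$; otherwise generate $D_{k+1}$ with $D_{k+1}\subseteq D^z(\tilde x_k)$, $D_{k+1}\supset D_k$ (strictly), and set $\tilde\alpha^{(d)}_{k+1}=1$ for $d\in D_{k+1}\setminus D_k$. Otherwise set $D_{k+1}=D_k$ and $\xi_{k+1}=\xi_k$. In all cases set $D=D_{k+1}$. Phase 3: choose any $x_{k+1}\in X\cap\mathcal{Z}$ with $f(x_{k+1})\le f(y^+)$. *)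

From mathcomp Require Import all_boot all_order all_algebra.
From mathcomp Require Import boolp classical_sets reals.
Set Implicit Arguments. Unset Strict Implicit. Unset Printing Implicit Defensive.
Import Order.TTheory GRing.Theory Num.Theory.
Local Open Scope ring_scope.
Local Open Scope classical_set_scope.

Section DFNDFL.
Variables (R : realType) (n : nat).

Definition vec := 'I_n -> R.

(* Ic i = true iff i is a continuous index (i in I^c); otherwise i in I^z *)
Variable Ic : pred 'I_n.
Variables (l u : vec).

Definition vadd (x y : vec) : vec := fun i => x i + y i.
Definition vsub (x y : vec) : vec := fun i => x i - y i.
Definition vscale (a : R) (x : vec) : vec := fun i => a * x i.
Definition vopp (x : vec) : vec := fun i => - x i.

Definition vnorm (x : vec) : R := Num.sqrt (\sum_(i < n) x i ^+ 2).

Definition inX (x : vec) : Prop := forall i, l i <= x i <= u i.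
Definition inZ (x : vec) : Prop := forall i, ~~ Ic i -> x i \is a Num.int.
Definition inXZ (x : vec) : Prop := inX x /\ inZ x.

Definition proj (x : vec) : vec := fun i => Num.max (l i) (Num.min (u i) (x i)).

Definition Dz (x : vec) : set vec :=
  [set d | (exists z : 'I_n -> int,
              (forall i, d i = (z i)%:~R) /\
              (\big[gcdn/0%N]_(i < n | ~~ Ic i) `|z i|%N = 1%N)) /\
           (forall i, Ic i -> d i = 0) /\
           inXZ (vadd x d)].

Definition Dc (x : vec) : set vec :=
  [set s | (forall i, ~~ Ic i -> s i = 0) /\
           (forall i, Ic i -> x i = l i -> 0 <= s i) /\
           (forall i, Ic i -> x i = u i -> s i <= 0)].

Variable f : vec -> R.
Variables (gamma delta : R).

Definition pcs_ok (w p : vec) (a : R) : Prop :=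
  f (proj (vadd w (vscale a p))) <= f w - gamma * a ^+ 2.

(* PCS(at, w, p) returns (alpha, pt) *)
Definition PCS (at_ : R) (w p : vec) (alpha : R) (pt : vec) : Prop :=
  (~ pcs_ok w p at_ /\ ~ pcs_ok w (vopp p) at_ /\ alpha = 0 /\ pt = p) \/
  (((pcs_ok w p at_ /\ pt = p) \/
    (~ pcs_ok w p at_ /\ pcs_ok w (vopp p) at_ /\ pt = vopp p)) /\
   exists j : nat,
     (forall i : nat, (1 <= i <= j)%N -> pcs_ok w pt (at_ / delta ^+ i)) /\
     ~ pcs_ok w pt (at_ / delta ^+ j.+1) /\
     alpha = at_ / delta ^+ j).

Definition ds_seq (abar a0 : R) (i : nat) : R :=
  iter i (fun a => Num.min abar (2 * a)) a0.

(* DS(at, w, p, xi) returns alpha *)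
Definition DS (at_ : R) (w p : vec) (xi : R) (alpha : R) : Prop :=
  exists abar : R,
    0 <= abar /\ inXZ (vadd w (vscale abar p)) /\
    (forall a, 0 <= a -> inXZ (vadd w (vscale a p)) -> a <= abar) /\
    let a0 := Num.min abar at_ in
    ((~ (0 < a0 /\ f (vadd w (vscale a0 p)) <= f w - xi) /\ alpha = 0) \/
     ((0 < a0 /\ f (vadd w (vscale a0 p)) <= f w - xi) /\
      exists j : nat,
        (forall i : nat, (i < j)%N ->
           ds_seq abar a0 i < abar /\
           f (vadd w (vscale (ds_seq abar a0 i.+1) p)) <= f w - xi) /\
        ~ (ds_seq abar a0 j < abar /\
           f (vadd w (vscale (ds_seq abar a0 j.+1) p)) <= f w - xi) /\
        alpha = ds_seq abar a0 j)).

Variables (theta : R) (s : nat -> vec).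

(* One iteration k of Algorithm DFNDFL.
   xk = x_k, atc = tilde alpha^c_k, atc' = tilde alpha^c_{k+1},
   xt = tilde x_k, xi = xi_k, xi' = xi_{k+1}, Dk = D_k, Dk' = D_{k+1},
   at_ = (d |-> tilde alpha^(d)_k), at' = (d |-> tilde alpha^(d)_{k+1}),
   yp = y^+ at the end of Phase 2, xk' = x_{k+1}. *)
Definition DFNDFL_step (k : nat) (xk : vec) (atc atc' : R) (xt : vec)
  (xi xi' : R) (Dk Dk' : set vec) (at_ at' : vec -> R) (yp xk' : vec) : Prop :=
  (exists (ac : R) (st : vec),
     PCS atc xk (s k) ac st /\
     ((ac = 0 /\ atc' = theta * atc /\ xt = xk) \/
      (ac <> 0 /\ atc' = ac /\ xt = proj (vadd xk (vscale ac st))))) /\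
  (* Phase 2.A : t 0, ..., t (m-1) are the (distinct) directions of D_k
     chosen in order, al j is the value returned by the j-th Discrete Search *)
  (exists (m : nat) (t : nat -> vec) (al : nat -> R),
     (forall j, (j < m)%N -> Dk (t j)) /\
     (forall j j', (j < m)%N -> (j' < m)%N -> t j = t j' -> j = j') /\
     (forall j, (j < m)%N -> DS (at_ (t j)) xt (t j) xi (al j)) /\
     (forall j, (j.+1 < m)%N -> al j = 0) /\
     ((* the loop stopped because D became empty, no success *)
      ((forall d, Dk d -> exists2 j, (j < m)%N & d = t j) /\
       (forall j, (j < m)%N -> al j = 0) /\ yp = xt) \/
      (* the loop stopped because the last search succeeded *)
      ((0 < m)%N /\ al m.-1 <> 0 /\ yp = vadd xt (vscale (al m.-1) (t m.-1))))
     /\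
     (forall j, (j < m)%N ->
        at' (t j) = if al j == 0
                    then Num.max 1 ((Num.floor (at_ (t j) / 2))%:~R)
                    else al j) /\
     (forall d, (forall j, (j < m)%N -> d <> t j) -> Dk d -> at' d = at_ d) /\
     (forall d, ~ Dk d -> ~ Dk' d -> at' d = at_ d) /\
     (let cond := yp = xt /\ (forall d, Dk d -> DS (at_ d) xt d xi 0 /\ at_ d = 1) in
      (cond ->
         xi' = theta * xi /\
         ((Dz xt `<=` Dk -> Dk' = Dk) /\
          (~ (Dz xt `<=` Dk) ->
             Dk' `<=` Dz xt /\ Dk `<=` Dk' /\ Dk' <> Dk /\
             (forall d, Dk' d -> ~ Dk d -> at' d = 1)))) /\
      (~ cond -> Dk' = Dk /\ xi' = xi))) /\
  inXZ xk' /\ f xk' <= f yp.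

Definition DFNDFL_run (x0 : vec) (xi0 : R) (D0 : set vec)
  (x xt : nat -> vec) (xi atc : nat -> R) (D : nat -> set vec)
  (at_ : nat -> vec -> R) (yp : nat -> vec) : Prop :=
  x 0%N = x0 /\ xi 0%N = xi0 /\ atc 0%N = 1 /\ D 0%N = D0 /\
  (forall d, D0 d -> at_ 0%N d = 1) /\
  forall k : nat,
    DFNDFL_step k (x k) (atc k) (atc k.+1) (xt k) (xi k) (xi k.+1)
      (D k) (D k.+1) (at_ k) (at_ k.+1) (yp k) (x k.+1).

End DFNDFL.

From mathcomp Require Import all_boot all_order all_algebra.
From mathcomp Require Import boolp classical_sets reals.
From mathcomp Require Import ring lra zify.
Import Order.TTheory GRing.Theory Num.Theory Order.NatMonotonyTheory.
Local Open Scope ring_scope.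
Local Open Scope classical_set_scope.

(* f(x_k) drops by at least gamma |xt_k - x_k|^2 at each iteration and is
   bounded below, being nonincreasing and close to f(xstar) along the iterates
   near xstar; so the continuous steps vanish.  xi_k vanishes because it is
   multiplied by theta at every k of H.  Near xstar the discrete coordinates of
   x_k and xt_k are those of xstar, hence D^z(xstar) is contained in D^z(xt_k).
   At k in H every direction of D_k failed the discrete search with unit step,
   and D_k is enlarged whenever it misses a direction of D^z(xt_k); as all D_k
   lie in a fixed finite set, D_k eventually contains every d in D^z(xstar).
   The failed test f(xt_k + d) > f(xt_k) - xi_k then passes to the limit by the
   Lipschitz continuity of f in the continuous variables. *)

Definition eventually (P : nat -> Prop) := exists N, forall k, (N <= k)%N -> P k.

Lemma eventuallyI {P Q : nat -> Prop} :
  eventually P -> eventually Q -> eventually (fun k => P k /\ Q k).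
Proof.
move=> [M hP] [N hQ]; exists (maxn M N) => k; rewrite geq_max => /andP[Mk Nk].
by split; [apply: hP | apply: hQ].
Qed.

Lemma finite_range_chain_stabilizes {V : Type} {T : finType} (g : T -> V)
    (D : nat -> set V) :
  (forall k, D k `<=` D k.+1) ->
  ~ (forall N, exists2 k, (N <= k)%N & exists2 t, D k.+1 (g t) & ~ D k (g t)).
Proof.
move=> D_sub often_new.
pose m k := #|[pred t | `[< D k (g t) >]]|.
have m_nondecr : {homo m : i j / (i <= j)%N}.
  apply: homo_leq => [//|j i k|k]; first exact: leq_trans.
  by apply: subset_leq_card; apply/fintype.subsetP => t; rewrite !inE; apply: D_sub.
have m_grows N : exists2 k, (N <= k)%N & (m k < m k.+1)%N.
  have [k Nk [t new old]] := often_new N; exists k => //.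
  apply: proper_card; apply/properP; split.
    by apply/fintype.subsetP => t'; rewrite !inE; apply: D_sub.
  by exists t; rewrite inE //; apply/asboolP.
have m_unbounded j : exists N, (j <= m N)%N.
  elim: j => [|j [N jN]]; first by exists 0%N.
  have [k Nk mk] := m_grows N; exists k.+1.
  exact: leq_ltn_trans (leq_trans jN (m_nondecr _ _ Nk)) mk.
have [N TN] := m_unbounded #|T|.+1.
by have := leq_trans TN (max_card _); rewrite ltnn.
Qed.

Section RealSequences.
Context {R : archiRealFieldType}.

Lemma descent_increments_vanish (a c : nat -> R) (B : R) :
  (forall k, 0 <= c k) -> (forall k, a k.+1 + c k <= a k) -> (forall k, B <= a k) ->
  forall e : R, 0 < e -> eventually (fun k => c k < e).
Proof.
move=> c_ge0 descent a_ge e e_gt0; apply: contrapT => not_small.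
have often_big N : exists2 k, (N <= k)%N & e <= c k.
  apply: contrapT => never; apply: not_small; exists N => k Nk.
  by rewrite ltNge; apply/negP => ek; apply: never; exists k.
have a_nonincr i j : (i <= j)%N -> a j <= a i.
  by apply: nonincnP => k; have := c_ge0 k; have := descent k; lra.
have a_drops (m : nat) : exists N, a N <= a 0%N - m%:R * e.
  elim: m => [|m [N aN]]; first by exists 0%N; rewrite mul0r subr0.
  have [k Nk ek] := often_big N; exists k.+1.
  have := descent k; have := a_nonincr _ _ Nk; rewrite mulrSr mulrDl mul1r; lra.
have gap_ge0 : 0 <= (a 0%N - B) / e by rewrite divr_ge0 ?subr_ge0 ?a_ge ?ltW.
have [N aN] := a_drops (Num.bound ((a 0%N - B) / e)).
have := archi_boundP gap_ge0; rewrite ltr_pdivrMr //; have := a_ge N; lra.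
Qed.

(* The drops xi_k - xi_(k+1) vanish, and at a contraction they are (1 - theta) xi_k. *)
Lemma frequent_contraction_vanish {xi : nat -> R} {theta : R} :
  theta < 1 -> (forall k, 0 <= xi k) -> (forall k, xi k.+1 <= xi k) ->
  (forall N, exists2 k, (N <= k)%N & xi k.+1 <= theta * xi k) ->
  forall e : R, 0 < e -> eventually (fun k => xi k < e).
Proof.
move=> theta_lt1 xi_ge0 xi_dec often e e_gt0.
have [|||N small_drop] :=
  descent_increments_vanish xi (fun k => xi k - xi k.+1) 0 _ _ xi_ge0 ((1 - theta) * e).
- by move=> k; rewrite subr_ge0.
- by move=> k; rewrite addrC subrK.
- by rewrite mulr_gt0 ?subr_gt0.
have [k Nk contract] := often N; exists k => j kj.
have xik : xi k < e by have := small_drop k Nk; nra.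
exact: le_lt_trans (nonincnP xi_dec _ _ kj) xik.
Qed.

End RealSequences.

Section Clamp.
Context {R : realDomainType}.
Implicit Types a b x y : R.

Lemma clamp_in_itv a b y : a <= b -> a <= Num.max a (Num.min b y) <= b.
Proof.
move=> ab; rewrite /Num.min /Num.max /Order.min /Order.max.
by case: (ltP b y) => ?; [case: (ltP a b) | case: (ltP a y)] => ?; apply/andP; lra.
Qed.

Lemma clamp_id a b x : a <= x <= b -> Num.max a (Num.min b x) = x.
Proof.
move=> /andP[ax xb]; rewrite /Num.min /Num.max /Order.min /Order.max.
by case: (ltP b x) => ?; [case: (ltP a b) | case: (ltP a x)] => ?; lra.
Qed.

Lemma clamp_sqr_dist_le a b x y : a <= x <= b ->
  (Num.max a (Num.min b y) - x) ^+ 2 <= (y - x) ^+ 2.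
Proof.
move=> /andP[ax xb]; rewrite /Num.min /Num.max /Order.min /Order.max.
by case: (ltP b y) => ?; [case: (ltP a b) | case: (ltP a y)] => ?; nra.
Qed.

End Clamp.

Lemma intr_eq_of_dist_lt1 (R : archiRealDomainType) (x y : R) :
  x \is a Num.int -> y \is a Num.int -> `|x - y| < 1 -> x = y.
Proof.
move=> xZ yZ xy1; apply/eqP; rewrite -subr_eq0; apply: contraTT xy1 => xy_neq0.
by rewrite -leNgt norm_intr_ge1 ?rpredB.
Qed.

Section Vectors.
Context {R : realType} {n : nat}.
Implicit Types v : vec R n.

Lemma vnorm_ge0 v : 0 <= vnorm v.
Proof. exact: sqrtr_ge0. Qed.

Lemma sqr_vnorm v : vnorm v ^+ 2 = \sum_(i < n) v i ^+ 2.
Proof. by rewrite sqr_sqrtr // sumr_ge0 // => i _; apply: sqr_ge0. Qed.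

Lemma vnorm_vsubxx v : vnorm (vsub v v) = 0.
Proof. by rewrite /vnorm big1 ?sqrtr0 // => i _; rewrite /vsub subrr expr0n. Qed.

Lemma normr_coord_le_vnorm v i : `|v i| <= vnorm v.
Proof.
rewrite -sqrtr_sqr ler_sqrt; last by rewrite sumr_ge0 // => j _; apply: sqr_ge0.
by rewrite (bigD1 i) //= lerDl sumr_ge0 // => j _; apply: sqr_ge0.
Qed.

End Vectors.

Section Problem.
Context {R : realType} {n : nat} {Ic : pred 'I_n} {l u : vec R n}.
Implicit Types a b y z : vec R n.

Lemma inZ_eq_of_vnorm_lt1 {a b} : inZ Ic a -> inZ Ic b -> vnorm (vsub a b) < 1 ->
  forall i, ~~ Ic i -> a i = b i.
Proof.
move=> aZ bZ ab1 i iz; apply: intr_eq_of_dist_lt1 (aZ i iz) (bZ i iz) _.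
exact: le_lt_trans (normr_coord_le_vnorm _ i) ab1.
Qed.

Lemma Dz_same_discrete {y z} : inX l u z -> (forall i, ~~ Ic i -> z i = y i) ->
  Dz Ic l u y `<=` Dz Ic l u z.
Proof.
move=> zX zy d [dZ [dc [ydX ydZ]]]; split=> //; split=> //; split=> i.
  by rewrite /vadd; case: (boolP (Ic i)) => [/dc-> | /zy->]; rewrite ?addr0; [apply: zX | apply: ydX].
by move=> iz; rewrite /vadd zy //; apply: ydZ.
Qed.

(* Directions in D^z(y) have integer entries bounded by the box widths. *)
Lemma Dz_finite_range : exists (T : finType) (g : T -> vec R n),
  forall y, inX l u y -> Dz Ic l u y `<=` range g.
Proof.
pose B := (\max_(i < n) Num.bound (`|u i - l i|)%R)%N.
exists {ffun 'I_n -> 'I_(B.*2).+1}.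
exists (fun (t : {ffun 'I_n -> 'I_(B.*2).+1}) (i : 'I_n) => ((t i)%:Z - B%:Z)%:~R : R).
move=> y yX d [[z [dz _]] [_ [ydX _]]].
have zB i : `|z i| <= B%:Z.
  have width : `|(z i)%:~R| <= `|u i - l i| :> R.
    rewrite -dz; have := yX i; have := ydX i; rewrite /vadd.
    move=> /andP[? ?] /andP[? ?]; rewrite ler_norml (ger0_norm _); last lra.
    by apply/andP; lra.
  have : `|z i|%:~R < (B%:Z)%:~R :> R.
    rewrite intr_norm; apply: le_lt_trans width (lt_le_trans (archi_boundP _) _) => //.
    by rewrite ler_nat; apply: (@leq_bigmax _ (fun j => Num.bound (`|u j - l j|)%R) i).
  by rewrite ltr_int => /ltW.
exists [ffun i => inord `|z i + B%:Z|] => //; apply: funext => i.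
rewrite dz ffunE inordK; last by have := zB i; lia.
by congr (_%:~R); have := zB i; lia.
Qed.

End Problem.

Section Procedures.
Context {R : realType} {n : nat} {Ic : pred 'I_n} {l u : vec R n}.
Context {f : vec R n -> R} {gamma delta : R}.
Implicit Types w p d st : vec R n.

Lemma PCS_success {at_ w p ac st} : PCS l u f gamma delta at_ w p ac st -> ac != 0 ->
  pcs_ok l u f gamma w st ac /\ (st = p \/ st = vopp p).
Proof.
case=> [[_ [_ [-> _]]] | [st_ok [j [expand [_ ->]]]]]; first by rewrite eqxx.
move=> _; have {st_ok}[st_ok st_p] : pcs_ok l u f gamma w st at_ /\ (st = p \/ st = vopp p).
  by case: st_ok => [[ok ->] | [_ [ok ->]]]; split=> //; [left | right].
split=> //; case: j expand => [|j] expand; first by rewrite expr0 divr1.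
by apply: expand; rewrite leqnn andbT.
Qed.

Lemma DS_success {at_ w p xi al} : DS Ic l u f at_ w p xi al -> al != 0 ->
  f (vadd w (vscale al p)) <= f w - xi.
Proof.
move=> [abar [_ [_ [_ /= [[_ al0] | [[_ ok] [[|j] [doubling [_ ->]]]]]]]]].
- by rewrite al0 eqxx.
- by [].
- by move=> _; exact: (doubling j (ltnSn j)).2.
Qed.

(* A unit step is always feasible, so the doubling never drops below 1. *)
Lemma DS_unit_failure {w d xi} : DS Ic l u f 1 w d xi 0 -> inXZ Ic l u (vadd w d) ->
  f w - xi < f (vadd w d).
Proof.
move=> [abar [_ [_ [abar_max /= DS0]]]] wdXZ.
have scale1 : vscale 1 d = d by apply: funext => i; rewrite /vscale mul1r.
have abar_ge1 : 1 <= abar by apply: abar_max; rewrite ?scale1.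
have min1 : Num.min abar 1 = 1 by rewrite /Num.min /Order.min; case: ltP => //; lra.
rewrite min1 scale1 in DS0; case: DS0 => [[fail _] | [_ [j [_ [_ ds0]]]]].
  by rewrite ltNge; apply/negP => ok; apply: fail.
have : 1 <= ds_seq abar 1 j.
  elim: j {ds0} => [|j IH] //=; rewrite /Num.min /Order.min; case: ltP => ?; lra.
by rewrite -ds0; lra.
Qed.

Lemma phase1_descent {theta atc atc' xk sk xt} :
  0 <= gamma -> (forall i, l i <= u i) -> inX l u xk ->
  (forall i, ~~ Ic i -> sk i = 0) -> vnorm sk = 1 ->
  (exists (ac : R) (st : vec R n), PCS l u f gamma delta atc xk sk ac st /\
     ((ac = 0 /\ atc' = theta * atc /\ xt = xk) \/
      (ac <> 0 /\ atc' = ac /\ xt = proj l u (vadd xk (vscale ac st))))) ->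
  [/\ inX l u xt, forall i, ~~ Ic i -> xt i = xk i &
      f xt + gamma * vnorm (vsub xt xk) ^+ 2 <= f xk].
Proof.
move=> gamma_ge0 lu xkX skz sk1 [ac [st [pcs [[_ [_ ->]] | [ac_neq0 [_ ->]]]]]].
  by split=> //; rewrite vnorm_vsubxx expr0n mulr0 addr0.
have [ok st_sk] := PCS_success pcs (introN eqP ac_neq0).
have stz i : ~~ Ic i -> st i = 0.
  by move=> iz; case: st_sk => ->; rewrite /vopp skz ?oppr0.
have st1 : \sum_(i < n) st i ^+ 2 = 1.
  rewrite -(expr1n _ 2) -sk1 sqr_vnorm.
  by case: st_sk => -> //; apply: eq_bigr => i _; rewrite /vopp sqrrN.
split.
- by move=> i; apply: clamp_in_itv.
- by move=> i iz; rewrite /proj /vadd /vscale stz // mulr0 addr0 clamp_id.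
have step_le : vnorm (vsub (proj l u (vadd xk (vscale ac st))) xk) ^+ 2 <= ac ^+ 2.
  rewrite sqr_vnorm -[ac ^+ 2]mulr1 -st1 mulr_sumr; apply: ler_sum => i _.
  apply: le_trans (clamp_sqr_dist_le _ _ _ _ (xkX i)) _.
  by rewrite /vadd /vscale addrC addKr exprMn.
by move: ok; rewrite /pcs_ok; have := ler_wpM2l gamma_ge0 step_le; lra.
Qed.

End Procedures.

Section Run.
Context {R : realType} {n : nat} {Ic : pred 'I_n} {l u : vec R n}.
Context {f : vec R n -> R} {gamma delta xi0 theta : R}.
Context {x0 : vec R n} {s : nat -> vec R n} {D0 : set (vec R n)}.
Context {x xt : nat -> vec R n} {xi atc : nat -> R} {D : nat -> set (vec R n)}.
Context {at_ : nat -> vec R n -> R} {yp : nat -> vec R n}.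
Hypotheses (lu : forall i, l i <= u i) (gamma_gt0 : 0 < gamma).
Hypotheses (theta_gt0 : 0 < theta) (theta_lt1 : theta < 1) (xi0_gt0 : 0 < xi0).
Hypotheses (x0_XZ : inXZ Ic l u x0) (s_Dc : forall k, Dc Ic l u x0 (s k) /\ vnorm (s k) = 1).
Hypothesis run : DFNDFL_run Ic l u f gamma delta theta s x0 xi0 D0 x xt xi atc D at_ yp.

Lemma run_step k : DFNDFL_step Ic l u f gamma delta theta s k (x k) (atc k) (atc k.+1)
  (xt k) (xi k) (xi k.+1) (D k) (D k.+1) (at_ k) (at_ k.+1) (yp k) (x k.+1).
Proof. by case: run => _ [_ [_ [_ [_ ?]]]]. Qed.

Lemma x_inXZ k : inXZ Ic l u (x k).
Proof.
case: k => [|k]; first by case: run => ->.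
by have [_ [_ []]] := run_step k.
Qed.

Lemma xt_phase1 k : [/\ inX l u (xt k), forall i, ~~ Ic i -> xt k i = x k i &
  f (xt k) + gamma * vnorm (vsub (xt k) (x k)) ^+ 2 <= f (x k)].
Proof.
have [[s_z _] s1] := s_Dc k.
exact: phase1_descent (ltW gamma_gt0) lu (x_inXZ k).1 s_z s1 (run_step k).1.
Qed.

Lemma xt_inX k : inX l u (xt k).
Proof. by have [] := xt_phase1 k. Qed.

Lemma xt_discrete k : forall i, ~~ Ic i -> xt k i = x k i.
Proof. by have [] := xt_phase1 k. Qed.

Definition searches_failed k := yp k = xt k /\
  forall d, D k d -> DS Ic l u f (at_ k d) (xt k) d (xi k) 0 /\ at_ k d = 1.

Lemma phase2B_spec k :
  (searches_failed k -> xi k.+1 = theta * xi k /\ D k `<=` D k.+1 /\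
     (~ (Dz Ic l u (xt k) `<=` D k) -> D k.+1 `<=` Dz Ic l u (xt k) /\ D k.+1 <> D k)) /\
  (~ searches_failed k -> D k.+1 = D k /\ xi k.+1 = xi k).
Proof.
have [_ [[m [t [al [_ [_ [_ [_ [_ [_ [_ [_ /= [failed ok]]]]]]]]]]]] _]] := run_step k.
split=> // /failed [xi_k [Dz_sub Dz_nsub]]; do 2?split=> //.
- by have [/Dz_sub-> | /Dz_nsub [_ [? _]]] // := pselect (Dz Ic l u (xt k) `<=` D k).
- by move=> /Dz_nsub [? [_ [? _]]].
Qed.

Lemma xi_next k : xi k.+1 = theta * xi k \/ xi k.+1 = xi k.
Proof.
have [failed ok] := phase2B_spec k.
by have [/failed[]|/ok[]] := pselect (searches_failed k); [left | right].
Qed.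

Lemma D_sub_next k : D k `<=` D k.+1.
Proof.
have [failed ok] := phase2B_spec k.
have [/failed[_ [D_sub _]] // | /ok[-> _]] := pselect (searches_failed k).
exact: subset_refl.
Qed.

Lemma failed_of_xi_lt {k} : xi k.+1 < xi k -> searches_failed k.
Proof.
move=> xi_lt; apply: contrapT => /(phase2B_spec k).2 [_ xi_eq].
by rewrite xi_eq ltxx in xi_lt.
Qed.

Lemma xi_contracts {k} : xi k.+1 < xi k -> xi k.+1 = theta * xi k.
Proof. by move/failed_of_xi_lt/(phase2B_spec k).1 => []. Qed.

Lemma new_direction {k} : xi k.+1 < xi k -> ~ (Dz Ic l u (xt k) `<=` D k) ->
  exists e, [/\ D k.+1 e, Dz Ic l u (xt k) e & ~ D k e].
Proof.
move=> /failed_of_xi_lt/(phase2B_spec k).1 [_ [D_sub grow]] /grow [D_Dz D_neq].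
apply: contrapT => no_new; apply: D_neq; rewrite eqEsubset; split=> // e De.
by apply: contrapT => nDe; apply: no_new; exists e; split=> //; apply: D_Dz.
Qed.

Lemma D_nondecr : {homo D : i j / (i <= j)%N >-> i `<=` j}.
Proof.
apply: homo_leq => [A | B A C AB BC | k]; first exact: subset_refl.
  exact: subset_trans AB BC.
exact: D_sub_next.
Qed.

Lemma xi_gt0 k : 0 < xi k.
Proof.
elim: k => [|k IH]; first by case: run => _ [->].
by case: (xi_next k) => ->; rewrite ?mulr_gt0.
Qed.

Lemma xi_nonincr k : xi k.+1 <= xi k.
Proof. by case: (xi_next k) => -> //; rewrite ger_pMl ?xi_gt0 ?(ltW theta_lt1). Qed.

(* When a search succeeds it decreases f by at least xi_k > 0. *)
Lemma f_next_le_xt k : f (x k.+1) <= f (xt k).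
Proof.
have [_ [[m [t [al [_ [_ [DS_t [_ [stop _]]]]]]]] [_ f_x]]] := run_step k.
apply: le_trans f_x _; case: stop => [[_ [_ ->]] | [m_gt0 [al_neq0 ->]]] //.
have last_lt_m : (m.-1 < m)%N by rewrite prednK.
apply: le_trans (DS_success (DS_t _ last_lt_m) (introN eqP al_neq0)) _.
by rewrite gerBl ltW ?xi_gt0.
Qed.

Lemma f_descent k : f (x k.+1) + gamma * vnorm (vsub (xt k) (x k)) ^+ 2 <= f (x k).
Proof. by have [_ _ desc] := xt_phase1 k; have := f_next_le_xt k; lra. Qed.

Lemma f_x_nonincr k : f (x k.+1) <= f (x k).
Proof.
have := mulr_ge0 (ltW gamma_gt0) (sqr_ge0 (vnorm (vsub (xt k) (x k)))).
by have := f_descent k; lra.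
Qed.

Context {L : R} {xstar : vec R n}.
Hypotheses (L_gt0 : 0 < L) (xstar_XZ : inXZ Ic l u xstar).
Hypothesis f_lip : forall a b : vec R n, (forall i, ~~ Ic i -> a i = b i) ->
  `|f a - f b| <= L * vnorm (vsub a b).
Hypothesis xstar_cluster : forall eps : R, 0 < eps -> forall N : nat,
  exists k : nat, (N <= k)%N /\ xi k.+1 < xi k /\ vnorm (vsub (x k) xstar) < eps.

Lemma f_lip_shift {a b} d : (forall i, ~~ Ic i -> a i = b i) ->
  `|f (vadd a d) - f (vadd b d)| <= L * vnorm (vsub a b).
Proof.
move=> ab; have -> : vsub a b = vsub (vadd a d) (vadd b d).
  by apply: funext => i; rewrite /vsub /vadd; ring.
by apply: f_lip => i iz; rewrite /vadd ab.
Qed.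

Lemma x_discrete_eq {k} : vnorm (vsub (x k) xstar) < 1 -> forall i, ~~ Ic i -> x k i = xstar i.
Proof. exact: inZ_eq_of_vnorm_lt1 (x_inXZ k).2 xstar_XZ.2. Qed.

Lemma f_x_lower_bound k : f xstar - L <= f (x k).
Proof.
have [k' [kk' [_ near]]] := xstar_cluster _ ltr01 k.
have f_mono : f (x k') <= f (x k) := nonincnP (f := fun j => f (x j)) f_x_nonincr _ _ kk'.
have := f_lip _ _ (x_discrete_eq near); have := ler_wpM2l (ltW L_gt0) (ltW near).
by rewrite mulr1 ler_norml => ? /andP[? ?]; lra.
Qed.

Lemma step_vanishes {e} : 0 < e -> eventually (fun k => vnorm (vsub (xt k) (x k)) < e).
Proof.
move=> e_gt0.
have [|N small] := descent_increments_vanish (fun k => f (x k))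
  (fun k => gamma * vnorm (vsub (xt k) (x k)) ^+ 2) (f xstar - L)
  (fun k => mulr_ge0 (ltW gamma_gt0) (sqr_ge0 _)) f_descent f_x_lower_bound (gamma * e ^+ 2).
  by rewrite mulr_gt0 ?exprn_gt0.
exists N => k /small; rewrite ltr_pM2l // => lt_sqr.
by rewrite -(ltr_pXn2r (n := 2)) ?nnegrE ?vnorm_ge0 ?ltW.
Qed.

Lemma xi_vanishes {e} : 0 < e -> eventually (fun k => xi k < e).
Proof.
apply: (frequent_contraction_vanish theta_lt1 (fun k => ltW (xi_gt0 k)) xi_nonincr).
move=> N; have [k [Nk [xi_lt _]]] := xstar_cluster _ ltr01 N.
by exists k => //; rewrite xi_contracts.
Qed.

Lemma cluster_eventually {P : nat -> Prop} {eps : R} : eventually P -> 0 < eps ->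
  exists k, [/\ xi k.+1 < xi k, vnorm (vsub (x k) xstar) < eps & P k].
Proof.
move=> [N PN] eps_gt0; have [k [Nk [xi_lt near]]] := xstar_cluster _ eps_gt0 N.
by exists k; split=> //; apply: PN.
Qed.

Lemma Dz_xt_of_near {k} : vnorm (vsub (x k) xstar) < 1 ->
  Dz Ic l u xstar `<=` Dz Ic l u (xt k).
Proof.
move=> near; apply: Dz_same_discrete (xt_inX k) _ => i iz.
by rewrite xt_discrete // x_discrete_eq.
Qed.

(* Near xstar, every iterate of H missing d enlarges D_k inside a fixed finite set. *)
Lemma D_eventually {d} : Dz Ic l u xstar d -> eventually (fun k => D k d).
Proof.
move=> xd; apply: contrapT => not_ev.
have nDd k : ~ D k d by move=> Dkd; apply: not_ev; exists k => j /D_nondecr; apply.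
have [T [g Dz_g]] := Dz_finite_range (Ic := Ic) (l := l) (u := u).
apply: (finite_range_chain_stabilizes g D D_sub_next) => N.
have [k [Nk [xi_lt near]]] := xstar_cluster _ ltr01 N.
have [|e [De Dz_e nDe]] := new_direction xi_lt.
  by move/(_ d (Dz_xt_of_near near _ xd)); apply: nDd.
have [t _ gte] := Dz_g _ (xt_inX k) e Dz_e.
by exists k => //; exists t; rewrite gte.
Qed.

Lemma f_le_discrete_neighbour d : Dz Ic l u xstar d -> f xstar <= f (vadd xstar d).
Proof.
move=> xd; apply/ler_addgt0Pr => e e_gt0.
pose eta := e / (8 * L).
have eta_gt0 : 0 < eta by rewrite divr_gt0 ?mulr_gt0.
have L_eta : L * eta = e / 8 by rewrite /eta; field; rewrite gt_eqF.
have ev := eventuallyI (D_eventually xd)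
  (eventuallyI (step_vanishes eta_gt0) (xi_vanishes (divr_gt0 e_gt0 (ltr0n _ 2)))).
have rho_gt0 : 0 < Num.min 1 eta by rewrite lt_min ltr01 eta_gt0.
have [k [xi_lt + [Dkd [step_small xi_small]]]] := cluster_eventually ev rho_gt0.
rewrite lt_min => /andP[near1 near_eta].
have x_xstar := x_discrete_eq near1.
have xt_x := xt_discrete k.
have [_ [_ xtd_XZ]] := Dz_xt_of_near near1 _ xd.
have [_ /(_ d Dkd) [DS_d at_d]] := failed_of_xi_lt xi_lt.
rewrite at_d in DS_d; have fail := DS_unit_failure DS_d xtd_XZ.
have := f_lip _ _ xt_x; have := f_lip _ _ x_xstar.
have := f_lip_shift d xt_x; have := f_lip_shift d x_xstar.
have := ler_wpM2l (ltW L_gt0) (ltW step_small).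
have := ler_wpM2l (ltW L_gt0) (ltW near_eta).
by rewrite L_eta !ler_norml => ? ? /andP[? ?] /andP[? ?] /andP[? ?] /andP[? ?]; lra.
Qed.

End Run.

Theorem mainTheorem4 (R : realType) (n : nat) (Ic : pred 'I_n) (l u : vec R n)
  (f : vec R n -> R) (gamma delta xi0 theta : R)
  (x0 : vec R n) (s : nat -> vec R n) (D0 : set (vec R n))
  (* problem data *)
  (hlu : forall i, l i < u i)
  (hlz : forall i, ~~ Ic i -> l i \is a Num.int)
  (huz : forall i, ~~ Ic i -> u i \is a Num.int)
  (hLip : exists L : R, 0 < L /\
     forall x y : vec R n, (forall i, ~~ Ic i -> x i = y i) ->
       `|f x - f y| <= L * vnorm (vsub x y))
  (* algorithm data *)
  (hgamma : 0 < gamma) (hdelta : 0 < delta < 1)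
  (hxi0 : 0 < xi0) (htheta : 0 < theta < 1)
  (hx0 : inXZ Ic l u x0)
  (hs : forall k, Dc Ic l u x0 (s k) /\ vnorm (s k) = 1)
  (hD0 : D0 `<=` Dz Ic l u x0)
  (* a run of the algorithm *)
  (x xt : nat -> vec R n) (xi atc : nat -> R) (D : nat -> set (vec R n))
  (at_ : nat -> vec R n -> R) (yp : nat -> vec R n)
  (hrun : DFNDFL_run Ic l u f gamma delta theta s x0 xi0 D0 x xt xi atc D at_ yp)
  (* x* an accumulation point of {x_k}_{k in H}, H = {k : xi_{k+1} < xi_k} *)
  (xstar : vec R n) (hxstar : inXZ Ic l u xstar)
  (hacc : forall eps : R, 0 < eps -> forall N : nat,
     exists k : nat, (N <= k)%N /\ xi k.+1 < xi k /\ vnorm (vsub (x k) xstar) < eps) :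
  forall d : vec R n, Dz Ic l u xstar d -> f xstar <= f (vadd xstar d).
Proof.
have [L [L_gt0 f_lip]] := hLip.
have [theta_gt0 theta_lt1] := andP htheta.
exact: (f_le_discrete_neighbour (fun i => ltW (hlu i)) hgamma theta_gt0 theta_lt1
  hxi0 hx0 hs hrun L_gt0 hxstar f_lip hacc).
Qed.
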